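(* Let $\ell\ge 2$, let $\mathcal F\subset\binom{[n]}{\ell}$ be an intersecting family, and let $x\in\bigcup_{F\in\mathcal F}F$. Then $|\mathcal F(x)|\geq \gamma_{\ell-1}(\mathcal F)+1$, with equality only if $\mathcal F(x)$ consists of $\gamma_{\ell-1}(\mathcal F)+1$ pairwise disjoint $(\ell-1)$-sets.
   Context: A family is intersecting if any two members intersect. $\mathcal F(x)=\{F\setminus\{x\}: x\in F\in\mathcal F\}$. For $S\subset[n]$, $\mathcal F(\overline S)=\{F\in\mathcal F: F\cap S=\emptyset\}$, and $\gamma_{\ell-1}(\mathcal F)=\min_{S\in\binom{[n]}{\ell-1}}|\mathcal F(\overline S)|$. *)

From mathcomp Require Import all_boot.
Set Implicit Arguments. Unset Strict Implicit. Unset Printing Implicit Defensive.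

Definition intersecting n (F : {set {set 'I_n}}) : bool :=
  [forall A in F, forall B in F, A :&: B != set0].

Definition link n (F : {set {set 'I_n}}) (x : 'I_n) : {set {set 'I_n}} :=
  [set A :\ x | A in [set A in F | x \in A]].

Definition avoid n (F : {set {set 'I_n}}) (S : {set 'I_n}) : {set {set 'I_n}} :=
  [set A in F | [disjoint A & S]].

(* gamma_k(F) = min over k-subsets S of |F(bar S)|.  The default #|F| is an
   upper bound for every term, so this is the exact minimum whenever some
   k-subset of [n] exists (k <= n). *)
Definition gamma n (k : nat) (F : {set {set 'I_n}}) : nat :=
  \big[minn/#|F|]_(S : {set 'I_n} | #|S| == k) #|avoid F S|.

From mathcomp Require Import all_boot.
Set Implicit Arguments. Unset Strict Implicit. Unset Printing Implicit Defensive.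

(* Fix A in F(x), say A = B \ {x} with B in F.  Every C in F avoiding A meets
   B, hence contains x, so C |-> C \ {x} maps F(A-bar) injectively into
   F(x) \ {A}; as |A| = l - 1 this gives gamma_{l-1}(F) <= |F(A-bar)| < |F(x)|.
   If |F(x)| = gamma_{l-1}(F) + 1 the map is onto F(x) \ {A}, so every other
   member of F(x) is C \ {x} for some C disjoint from A. *)

Lemma bigmin_le_mem (I : eqType) (r : seq I) (P : pred I) (f : I -> nat) d j :
  j \in r -> P j -> \big[minn/d]_(i <- r | P i) f i <= f j.
Proof.
elim: r => [|a r IHr] //=; rewrite inE big_cons => /orP[/eqP <- -> | jr Pj].
  exact: geq_minl.
case: (P a); last exact: IHr.
exact: leq_trans (geq_minr _ _) (IHr jr Pj).
Qed.

Lemma gamma_le_avoid n k (F : {set {set 'I_n}}) (S : {set 'I_n}) :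
  #|S| = k -> gamma k F <= #|avoid F S|.
Proof. by move=> cardS; apply: bigmin_le_mem; rewrite ?mem_index_enum ?cardS. Qed.

Section Link.

Variables (n : nat) (F : {set {set 'I_n}}) (x : 'I_n).

Lemma linkP A :
  reflect (exists2 B, B \in F & x \in B /\ A = B :\ x) (A \in link F x).
Proof.
apply: (iffP imsetP) => [[B] | [B BF [xB ->]]].
  by rewrite inE => /andP[BF xB] ->; exists B.
by exists B; rewrite ?inE ?BF.
Qed.

Lemma mem_link B : B \in F -> x \in B -> B :\ x \in link F x.
Proof. by move=> BF xB; apply/linkP; exists B. Qed.

Lemma card_link_uniform l A :
  (forall B, B \in F -> #|B| = l) -> A \in link F x -> #|A| = l.-1.
Proof.
move=> Funif /linkP[B BF [xB ->]].
by rewrite -(Funif B BF) (cardsD1 x B) xB.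
Qed.

Hypothesis Fint : intersecting F.

Lemma avoid_link_mem A C : A \in link F x -> C \in avoid F A -> x \in C.
Proof.
case/linkP=> B BF [xB ->]; rewrite inE => /andP[CF CAdisj].
have /set0Pn[y] : B :&: C != set0.
  by move/forallP/(_ B): Fint; rewrite BF => /forall_inP->.
rewrite inE => /andP[yB yC]; have [<- // | yx] := eqVneq y x.
by move/disjointFr: CAdisj => /(_ y); rewrite yC !inE yx yB => /(_ isT).
Qed.

Lemma link_shadow_avoid_sub A :
  A != set0 -> A \in link F x ->
  (fun C => C :\ x) @: avoid F A \subset link F x :\ A.
Proof.
move=> A0 AL; apply/subsetP=> _ /imsetP[C CA ->].
have xC := avoid_link_mem AL CA; move: CA; rewrite inE => /andP[CF CAdisj].
rewrite !inE mem_link // andbT; apply: contraNneq A0 => CxA.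
by have := disjointWl (subsetDl C [set x]) CAdisj; rewrite CxA -setI_eq0 setIid.
Qed.

Lemma card_link_shadow_avoid A :
  A \in link F x -> #|(fun C => C :\ x) @: avoid F A| = #|avoid F A|.
Proof.
move=> AL; apply: card_in_imset => C1 C2.
move=> /(avoid_link_mem AL) xC1 /(avoid_link_mem AL) xC2 E.
by rewrite -(setD1K xC1) -(setD1K xC2) E.
Qed.

Lemma card_avoid_lt_link A :
  A != set0 -> A \in link F x -> #|avoid F A| < #|link F x|.
Proof.
move=> A0 AL; rewrite -card_link_shadow_avoid //.
rewrite (cardsD1 A (link F x)) AL add1n ltnS.
exact/subset_leq_card/link_shadow_avoid_sub.
Qed.

Lemma link_disjoint_of_tight A B :
  A != set0 -> A \in link F x -> #|link F x| = #|avoid F A|.+1 ->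
  B \in link F x -> A != B -> [disjoint A & B].
Proof.
move=> A0 AL tight BL AB.
have onto : (fun C => C :\ x) @: avoid F A = link F x :\ A.
  apply/eqP; rewrite eqEcard link_shadow_avoid_sub //= card_link_shadow_avoid //.
  by rewrite -ltnS -tight (cardsD1 A (link F x)) AL.
have : B \in link F x :\ A by rewrite !inE eq_sym AB.
rewrite -onto => /imsetP[C]; rewrite inE => /andP[_ CAdisj] ->.
by rewrite disjoint_sym (disjointWl (subsetDl C _)).
Qed.

End Link.

Theorem fact4p6 (n l : nat) (F : {set {set 'I_n}}) (x : 'I_n) :
  2 <= l ->
  (forall A, A \in F -> #|A| = l) ->
  intersecting F ->
  (exists2 A, A \in F & x \in A) ->
  (gamma (l.-1) F).+1 <= #|link F x| /\
  (#|link F x| = (gamma (l.-1) F).+1 ->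
     (forall A, A \in link F x -> #|A| = l.-1) /\
     (forall A B, A \in link F x -> B \in link F x -> A != B ->
        [disjoint A & B])).
Proof.
move=> l_ge2 Funif Fint [B0 B0F xB0].
have cardL A : A \in link F x -> #|A| = l.-1 := card_link_uniform Funif.
have linkN0 A : A \in link F x -> A != set0.
  by move=> AL; rewrite -card_gt0 cardL // -ltnS (ltn_predK l_ge2).
have gamma_lt A : A \in link F x -> gamma l.-1 F < #|link F x|.
  move=> AL; apply: leq_ltn_trans (gamma_le_avoid F (cardL A AL)) _.
  exact: (card_avoid_lt_link Fint (linkN0 A AL) AL).
split; first exact: (gamma_lt _ (mem_link B0F xB0)).
move=> tight; split=> // A B AL BL AB.
apply: (link_disjoint_of_tight Fint (linkN0 A AL) AL _ BL AB).
apply/eqP; rewrite eqn_leq (card_avoid_lt_link Fint) ?linkN0 // andbT tight ltnS.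
exact: gamma_le_avoid (cardL A AL).
Qed.
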